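(* Let $\mathcal{P}=(V,\le)$ be a finite IIC poset and $G_{\mathcal{P}}$ its predecessors-successors bipartite graph. Then every biclique of $G_{\mathcal{P}}$ is equal to $X_v\cup Y_v$ for some $v\in V$.
   Context: All graphs are finite and simple. A biclique of a graph $G$ is a set $P\subseteq V(G)$ such that the induced subgraph $G[P]$ is a complete bipartite graph with both parts nonempty, and $P$ is inclusion-maximal with this property. For a poset $\mathcal{P}=(V,\le)$ and $x\in V$, $I^-_{\mathcal{P}}(x)=\{y\in V: y\le x\}$ and $I^+_{\mathcal{P}}(x)=\{y\in V: x\le y\}$. $\mathcal{P}$ is interval intersection closed (IIC) if for all $u,v\in V$: whenever $I^-_{\mathcal{P}}(u)\cap I^-_{\mathcal{P}}(v)\neq\emptyset$ there is $w\in V$ with $I^-_{\mathcal{P}}(w)=I^-_{\mathcal{P}}(u)\cap I^-_{\mathcal{P}}(v)$, and whenever $I^+_{\mathcal{P}}(u)\cap I^+_{\mathcal{P}}(v)\neq\emptyset$ there is $w\in V$ with $I^+_{\mathcal{P}}(w)=I^+_{\mathcal{P}}(u)\cap I^+_{\mathcal{P}}(v)$. The predecessors-successors bipartite graph $G_{\mathcal{P}}=(A\cup B,E)$ has $A=\{a_v: v\in V\}$, $B=\{b_v:v\in V\}$ (two disjoint copies of $V$) and $E=\{a_ub_v: u,v\in V,\ u\le v\}$. For $v\in V$, $X_v=\{a_u: u\in I^-_{\mathcal{P}}(v)\}$ and $Y_v=\{b_w: w\in I^+_{\mathcal{P}}(v)\}$. *)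

From mathcomp Require Import all_boot.
Set Implicit Arguments. Unset Strict Implicit. Unset Printing Implicit Defensive.

Definition complete_bipartite_induced (T : finType) (e : rel T) (P : {set T}) : Prop :=
  exists X Y : {set T},
    [/\ P = X :|: Y, [disjoint X & Y], X != set0, Y != set0 &
      [/\ forall x y, x \in X -> y \in Y -> e x y,
          forall x x', x \in X -> x' \in X -> ~~ e x x' &
          forall y y', y \in Y -> y' \in Y -> ~~ e y y']].

Definition biclique (T : finType) (e : rel T) (P : {set T}) : Prop :=
  complete_bipartite_induced e P /\
  (forall Q : {set T}, P \subset Q -> complete_bipartite_induced e Q -> Q = P).

Definition partial_order (V : finType) (le : rel V) : Prop :=
  [/\ reflexive le, antisymmetric le & transitive le].

Definition Iminus (V : finType) (le : rel V) (x : V) : {set V} := [set y | le y x].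
Definition Iplus (V : finType) (le : rel V) (x : V) : {set V} := [set y | le x y].

Definition IIC (V : finType) (le : rel V) : Prop :=
  forall u v : V,
    (Iminus le u :&: Iminus le v != set0 ->
       exists w, Iminus le w = Iminus le u :&: Iminus le v) /\
    (Iplus le u :&: Iplus le v != set0 ->
       exists w, Iplus le w = Iplus le u :&: Iplus le v).

(* Predecessors-successors bipartite graph on V + V:
   inl u = a_u, inr v = b_v, edge a_u b_v iff u <= v. *)
Definition ps_edge (V : finType) (le : rel V) : rel (V + V) :=
  fun p q => match p, q with
             | inl u, inr v => le u v
             | inr v, inl u => le u v
             | _, _ => false
             end.

Definition Xset (V : finType) (le : rel V) (v : V) : {set V + V} :=
  [set inl u | u in Iminus le v].
Definition Yset (V : finType) (le : rel V) (v : V) : {set V + V} :=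
  [set inr w | w in Iplus le v].

From mathcomp Require Import all_boot.
Set Implicit Arguments. Unset Strict Implicit. Unset Printing Implicit Defensive.

(* A vertex set of G_P is determined by its left part U (vertices a_u) and its
   right part W (vertices b_w).  We first show that such a set induces a
   complete bipartite graph exactly when U and W are nonempty and every
   element of U lies below every element of W; hence a biclique corresponds
   to a pair (U, W) that is maximal for this property.  The order-theoretic
   heart is then: in a maximal pair, U is closed under the IIC join of two of
   its elements (the element generating I⁺(u) ∩ I⁺(u')), so a maximal element
   m of U is its maximum; then U ⊆ I⁻(m), W ⊆ I⁺(m), and maximality of the
   pair forces U = I⁻(m) and W = I⁺(m). *)

Section BipartiteSets.

Variable V : finType.

Definition bip (U W : {set V}) : {set V + V} :=
  [set inl u | u in U] :|: [set inr w | w in W].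

Definition lefts (P : {set V + V}) : {set V} := [set u | inl u \in P].
Definition rights (P : {set V + V}) : {set V} := [set w | inr w \in P].

Lemma in_bip_inl (U W : {set V}) (u : V) : (inl u \in bip U W) = (u \in U).
Proof.
rewrite inE (mem_imset _ _ (@inl_inj V V)).
by case: imsetP => [[w _ //]|_]; rewrite orbF.
Qed.

Lemma in_bip_inr (U W : {set V}) (w : V) : (inr w \in bip U W) = (w \in W).
Proof.
rewrite inE (mem_imset _ _ (@inr_inj V V)).
by case: imsetP => [[u _ //]|_].
Qed.

Lemma bip_parts (P : {set V + V}) : P = bip (lefts P) (rights P).
Proof. by apply/setP => -[u|w]; rewrite ?in_bip_inl ?in_bip_inr inE. Qed.

Lemma lefts_bip (U W : {set V}) : lefts (bip U W) = U.
Proof. by apply/setP => u; rewrite inE in_bip_inl. Qed.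

Lemma rights_bip (U W : {set V}) : rights (bip U W) = W.
Proof. by apply/setP => w; rewrite inE in_bip_inr. Qed.

Lemma bipS (U U' W W' : {set V}) :
  U \subset U' -> W \subset W' -> bip U W \subset bip U' W'.
Proof. by move=> sU sW; apply: setUSS; apply: imsetS. Qed.

Definition is_left (p : V + V) : bool := if p is inl _ then true else false.

Variable le : rel V.

Lemma ps_edge_sides (p q : V + V) : ps_edge le p q -> is_left p = ~~ is_left q.
Proof. by case: p q => [u|w] [u'|w']. Qed.

Definition below_all (U W : {set V}) : Prop :=
  forall u w, u \in U -> w \in W -> le u w.

(* A vertex set induces a complete bipartite subgraph of G_P iff both of its
   parts are nonempty and the left part lies below the right part; the
   bipartition is then necessarily the one into sides. *)
Lemma complete_bipartite_bip (U W : {set V}) :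
  complete_bipartite_induced (ps_edge le) (bip U W) <->
  [/\ U != set0, W != set0 & below_all U W].
Proof.
split.
- move=> [X [Y [PXY _ /set0Pn [x xX] /set0Pn [y yY] [cross _ _]]]].
  have memP (p : V + V) : (p \in bip U W) = (p \in X :|: Y) by rewrite PXY.
  have [nU nW] : U != set0 /\ W != set0.
    case: x xX y yY (cross x y xX yY) => [u|w] xX [u'|w'] yY //= _;
      split; apply/set0Pn; [exists u | exists w' | exists u' | exists w];
      by rewrite -?(in_bip_inl U W) -?(in_bip_inr U W) memP inE ?xX ?yY ?orbT.
  have sideX p : p \in X -> is_left p = ~~ is_left y.
    by move=> pX; apply: ps_edge_sides; apply: cross.
  have sideY p : p \in Y -> is_left p = is_left y.
    move=> pY; apply/negb_inj; rewrite -(sideX x xX).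
    exact/esym/(@ps_edge_sides x p (cross x p xX pY)).
  have PU u : u \in U -> inl u \in X :|: Y by rewrite -memP in_bip_inl.
  have PW w : w \in W -> inr w \in X :|: Y by rewrite -memP in_bip_inr.
  split=> // u w uU wW.
  have /setUP [uX|uY] := PU u uU; have /setUP [wX|wY] := PW w wW.
  + by move: (sideX _ uX); rewrite -(sideX _ wX).
  + exact: (cross _ _ uX wY).
  + exact: (cross _ _ wX uY).
  + by move: (sideY _ uY); rewrite -(sideY _ wY).
- move=> [/set0Pn [u uU] /set0Pn [w wW] below].
  exists [set inl u | u in U], [set inr w | w in W]; split => //.
  + rewrite disjoint_subset; apply/subsetP => _ /imsetP [a _ ->].
    by rewrite inE; apply/negP => /imsetP [b _].
  + by apply/set0Pn; exists (inl u); apply: imset_f.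
  + by apply/set0Pn; exists (inr w); apply: imset_f.
  split.
  + by move=> _ _ /imsetP [a aU ->] /imsetP [b bW ->]; apply: below.
  + by move=> _ _ /imsetP [a _ ->] /imsetP [b _ ->].
  + by move=> _ _ /imsetP [a _ ->] /imsetP [b _ ->].
Qed.

Definition maximal_pair (U W : {set V}) : Prop :=
  [/\ U != set0, W != set0, below_all U W &
      forall U' W' : {set V}, U \subset U' -> W \subset W' -> below_all U' W' ->
        U' = U /\ W' = W].

Lemma biclique_maximal_pair (P : {set V + V}) :
  biclique (ps_edge le) P -> maximal_pair (lefts P) (rights P).
Proof.
move=> [cbP maxP].
have /complete_bipartite_bip [nU nW below] :
    complete_bipartite_induced (ps_edge le) (bip (lefts P) (rights P)).
  by rewrite -bip_parts.
split=> // U' W' sU sW below'.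
have nU' : U' != set0 by apply: contraNneq nU => U'0; rewrite -subset0 -U'0.
have nW' : W' != set0 by apply: contraNneq nW => W'0; rewrite -subset0 -W'0.
have sP : P \subset bip U' W' by rewrite {1}(bip_parts P) bipS.
have E := maxP _ sP (proj2 (complete_bipartite_bip U' W') (And3 nU' nW' below')).
by rewrite -E lefts_bip rights_bip.
Qed.

End BipartiteSets.

Section MaximalPairs.

Variables (V : finType) (le : rel V).
Hypothesis le_refl : reflexive le.
Hypothesis le_anti : antisymmetric le.
Hypothesis le_trans : transitive le.

(* A nonempty finite subset of a poset has a maximal element: take one with
   the largest principal down-set. *)
Lemma exists_maximal (U : {set V}) (u0 : V) : u0 \in U ->
  exists2 m, m \in U & forall z, z \in U -> le m z -> z = m.
Proof.
move=> u0U; have [m mU mmax] := arg_maxnP (fun m => #|Iminus le m|) u0U.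
exists m => // z zU mz.
have sub : Iminus le m \subset Iminus le z.
  by apply/subsetP => a; rewrite !inE => am; apply: le_trans am mz.
have Eq : Iminus le m = Iminus le z by apply/eqP; rewrite eqEcard sub; apply: mmax.
have : z \in Iminus le m by rewrite Eq inE le_refl.
by rewrite inE => zm; apply: le_anti; rewrite zm mz.
Qed.

(* In an IIC poset, the left part of a maximal pair contains an upper bound of
   any two of its elements, namely their IIC join. *)
Lemma maximal_pair_upper_bound (U W : {set V}) (u u' : V) :
  IIC le -> maximal_pair le U W -> u \in U -> u' \in U ->
  exists2 z, z \in U & le u z && le u' z.
Proof.
move=> iic [_ /set0Pn [w0 w0W] below maxUW] uU u'U.
have common : Iplus le u :&: Iplus le u' != set0.
  by apply/set0Pn; exists w0; rewrite !inE !below.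
have [z Ez] := (iic u u').2 common.
have zW w : w \in W -> le z w.
  move=> wW; have : w \in Iplus le u :&: Iplus le u' by rewrite !inE !below.
  by rewrite -Ez inE.
have below' : below_all le (z |: U) W.
  by move=> a w /setU1P [-> | aU] wW; [exact: zW | exact: below].
have [EU _] := maxUW _ _ (subsetUr _ _) (subxx W) below'.
exists z; first by rewrite -EU setU11.
have : z \in Iplus le z by rewrite inE le_refl.
by rewrite Ez !inE.
Qed.

(* Hence a maximal element of the left part is its maximum. *)
Lemma maximal_pair_max (U W : {set V}) :
  IIC le -> maximal_pair le U W -> exists2 m, m \in U & forall u, u \in U -> le u m.
Proof.
move=> iic mUW; have [/set0Pn [u0 u0U] _ _ _] := mUW.
have [m mU mmax] := exists_maximal u0U.
exists m => // u uU.
have [z zU /andP [uz mz]] := maximal_pair_upper_bound iic mUW uU mU.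
by rewrite -(mmax z zU mz).
Qed.

Lemma maximal_pair_intervals (U W : {set V}) :
  IIC le -> maximal_pair le U W -> exists v, U = Iminus le v /\ W = Iplus le v.
Proof.
move=> iic mUW; have [m mU umax] := maximal_pair_max iic mUW.
have [_ _ below maxUW] := mUW.
exists m; suff [-> ->] : Iminus le m = U /\ Iplus le m = W by [].
apply: maxUW.
- by apply/subsetP => u uU; rewrite inE umax.
- by apply/subsetP => w wW; rewrite inE below.
- by move=> u w; rewrite !inE; apply: le_trans.
Qed.

End MaximalPairs.

Theorem lemma8 (V : finType) (le : rel V) :
  partial_order le -> IIC le ->
  forall P : {set V + V}, biclique (ps_edge le) P ->
  exists v : V, P = Xset le v :|: Yset le v.
Proof.
move=> [refl anti trans] iic P /biclique_maximal_pair mP.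
have [v [EU EW]] := maximal_pair_intervals refl anti trans iic mP.
by exists v; rewrite [LHS]bip_parts EU EW.
Qed.
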